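(* Let $\mathfrak S$ be a commutative semiring. The set of all proper ideals, the set of all finitely generated (proper) ideals, and the set of all principal (proper) ideals of $\mathfrak S$, each endowed with the ideal topology, are connected spaces.
   Context: A semiring $(\mathfrak S,+,0,\cdot,1)$ has $(\mathfrak S,+,0)$ a commutative monoid, $(\mathfrak S,\cdot,1)$ a monoid, $0r=r0=0$, and two-sided distributivity; all semirings are commutative. An ideal is a nonempty proper subset closed under addition and under multiplication by elements of $\mathfrak S$. For a set $\sigma_{\mathfrak S}$ of ideals and an ideal $\mathfrak a$, $\mathfrak a^{\uparrow}=\{\mathfrak x\in\sigma_{\mathfrak S}\mid\mathfrak a\subseteq\mathfrak x\}$; the ideal topology on $\sigma_{\mathfrak S}$ has these sets as a subbasis of closed sets. *)

From HB Require Import structures.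
From mathcomp Require Import all_boot all_order all_algebra.
From mathcomp Require Import all_classical topology.
Set Implicit Arguments. Unset Strict Implicit. Unset Printing Implicit Defensive.
Import GRing.Theory.
Local Open Scope classical_set_scope.
Local Open Scope ring_scope.

Definition is_ideal (S : comPzSemiRingType) (a : set S) : Prop :=
  [/\ a !=set0, a <> setT,
      (forall x y, a x -> a y -> a (x + y)) &
      (forall r x, a x -> a (r * x))].

Definition gen_ideal (S : comPzSemiRingType) (s : seq S) : set S :=
  [set x | exists r : 'I_(size s) -> S, x = \sum_(i < size s) r i * s`_i].

Definition finitely_generated (S : comPzSemiRingType) (a : set S) : Prop :=
  exists s : seq S, a = gen_ideal s.

Definition principal (S : comPzSemiRingType) (a : set S) : Prop :=
  exists g : S, a = [set x | exists r : S, x = r * g].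

Definition ideal_space (S : comPzSemiRingType) : Type := set S.
HB.instance Definition _ (S : comPzSemiRingType) :=
  Choice.on (ideal_space S).

Definition proper_ideals (S : comPzSemiRingType) : set (ideal_space S) :=
  [set a | is_ideal a].
Definition fg_ideals (S : comPzSemiRingType) : set (ideal_space S) :=
  [set a | is_ideal a /\ finitely_generated a].
Definition principal_ideals (S : comPzSemiRingType) : set (ideal_space S) :=
  [set a | is_ideal a /\ principal a].

(* The ideal topology on a set
   sigma_S of ideals is the subspace topology on sigma_S (the traces of the
   subbasic sets a^up on sigma_S are exactly the subbasic sets of the ideal
   topology on sigma_S). *)

Definition upset (S : comPzSemiRingType) (a : set S) : set (ideal_space S) :=
  [set x : ideal_space S | a `<=` x].

HB.instance Definition _ (S : comPzSemiRingType) :=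
  @isSubBaseTopological.Build (ideal_space S) (set S)
    [set a | is_ideal a] (fun a => ~` upset a).

From mathcomp Require Import all_boot all_order all_algebra.
From mathcomp Require Import all_classical topology.
Local Open Scope classical_set_scope.
Import GRing.Theory.

(* Every open set of the ideal topology is closed downwards under
   inclusion, since a subbasic open set is the complement of an up-set.  So
   every open set containing an ideal contains the zero ideal, which then
   belongs to both parts of any separation: no separation exists. *)

Lemma connected_generic_point (T : topologicalType) (A : set T) (p : T) :
  (A !=set0 -> A p) ->
  (forall (U : set T) x, open U -> A x -> U x -> U p) ->
  connected A.
Proof.
move=> Ap genp B [x Bx] [U oU BAU] [V cV BAV].
have [Ax Ux] : A x /\ U x by move: Bx; rewrite BAU.
have Bp : B p.
  by rewrite BAU; split; [exact: Ap (ex_intro _ x Ax) | exact: genp oU Ax Ux].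
apply/seteqP; split => [y|y Ay]; first by rewrite BAU => -[].
rewrite BAV; split => //; have [//|nVy] := pselect (V y); move: Bp.
by rewrite BAV => -[_ Vp]; case: (genp _ _ (closed_openC cV) Ay nVy).
Qed.

Section IdealTopology.
Variable S : comPzSemiRingType.

Lemma ideal0 (a : set S) : is_ideal a -> a 0%R.
Proof. by case=> [[y ay]] _ _ /(_ 0%R y ay); rewrite mul0r. Qed.

Lemma is_ideal_zero (a : set S) : is_ideal a -> is_ideal [set 0%R : S].
Proof.
move=> ia; split.
- by exists 0%R.
- move=> zeroT; have [_ aNT _ _] := ia; apply: aNT.
  apply/seteqP; split=> // y _.
  have /= -> : [set 0%R : S] y by rewrite zeroT.
  exact: ideal0.
- by move=> x y /= -> ->; rewrite addr0.
- by move=> r x /= ->; rewrite mulr0.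
Qed.

Lemma open_subset_closed (U : set (ideal_space S)) (a b : ideal_space S) :
  open U -> U a -> b `<=` a -> U b.
Proof.
move=> [D openD <-] [V DV Va] ba; exists V => //.
have [F _ eV] := openD V DV; move: Va; rewrite -eV /= => Va c Fc cb.
by apply: (Va c Fc); apply: subset_trans cb ba.
Qed.

Lemma connected_ideal_set (A : set (ideal_space S)) :
  A `<=` @proper_ideals S -> (A !=set0 -> A [set 0%R]) -> connected A.
Proof.
move=> A_ideals A0; apply: connected_generic_point A0 _ => U a oU Aa Ua.
apply: open_subset_closed oU Ua _ => _ ->.
exact: ideal0 (A_ideals _ Aa).
Qed.

Lemma finitely_generated_zero : finitely_generated [set 0%R : S].
Proof.
exists [::]; apply/seteqP; split=> y.
- by move=> ->; exists (fun=> 0%R); rewrite big_ord0.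
- by move=> [r ->]; rewrite big_ord0.
Qed.

Lemma principal_zero : principal [set 0%R : S].
Proof.
exists 0%R; apply/seteqP; split=> y.
- by move=> ->; exists 0%R; rewrite mulr0.
- by move=> [r ->]; rewrite mulr0.
Qed.

End IdealTopology.

Theorem corollary3p14 (S : comPzSemiRingType) :
  [/\ connected (@proper_ideals S),
      connected (@fg_ideals S) &
      connected (@principal_ideals S)].
Proof.
split; apply: connected_ideal_set.
- by [].
- by move=> [a /is_ideal_zero].
- by move=> a [].
- by move=> [a [/is_ideal_zero ? _]]; split; last exact: finitely_generated_zero.
- by move=> a [].
- by move=> [a [/is_ideal_zero ? _]]; split; last exact: principal_zero.
Qed.
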